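(* Let $\mathcal{G}=(\mathcal{N},\mathcal{E})$ be a finite, undirected, connected graph, let $\mathcal{M}_1,\dots,\mathcal{M}_m$ be a non-overlapping partition of $\mathcal{N}$ into nonempty sets, let $h\ge 1$ and let real numbers $a_{i,\ell}$ ($i\in\mathcal{N}$, $\ell=1,\dots,h$) be given. Run the coalition formation procedure described in the context for $m-1$ iterations. Then either every resulting coalition $\mathcal{C}_p^{(m-1)}$, $p=1,\dots,m$, is self-sufficient, or $\mathcal{C}_p^{(m-1)}=\mathcal{N}$ for all $p=1,\dots,m$.
   Context: For $S\subseteq\mathcal{N}$ and $\ell\in\{1,\dots,h\}$ define the local imbalance $\Delta_{S,\ell}=\sum_{i\in S}a_{i,\ell}$ (in the application, $a_{i,\ell}=-\bar u^{\mathrm g}_i+\hat d_{i,\ell}+\bar w_i^{\mathrm d}$: maximum dispatchable generation subtracted from worst-case net load). $S$ is self-sufficient if $\Delta_{S,\ell}\le 0$ for all $\ell=1,\dots,h$. Coalition formation procedure: initially $\mathcal{C}_p^{(0)}=\mathcal{M}_p$ for each $p$. At every iteration the coalitions form a partition of $\mathcal{N}$ into unions of the $\mathcal{M}_p$ (each $\mathcal{M}_p$ belongs to the coalition $\mathcal{C}_p^{(r)}$, and two indices $p,q$ either have identical or disjoint coalitions). At iteration $r$ ($0\le r<m-1$): if all coalitions are self-sufficient, nothing changes. Otherwise, each coalition $\mathcal{C}$ that is not self-sufficient and has an adjacent coalition (a distinct coalition containing a node adjacent in $\mathcal{G}$ to a node of $\mathcal{C}$) requests a merger; an adjacent coalition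 $\mathcal{C}'$ that is not already engaged with another coalition in this iteration responds with $J^{\mathrm{cim}}=\sum_{\ell=1}^h\max(0,\Delta_{\mathcal{C}',\ell}+\Delta_{\mathcal{C},\ell})$ (an engaged one responds $+\infty$), and $\mathcal{C}$ merges (takes the union) with a responding adjacent coalition minimizing $J^{\mathrm{cim}}$ among finite values, all members of both coalitions updating their coalition to the union. Each coalition participates in at most one merger per iteration, and in every iteration in which some coalition is not self-sufficient and has an adjacent coalition, at least one merger takes place. *)

From HB Require Import structures.
From mathcomp Require Import all_boot all_order all_algebra.
From mathcomp Require Import reals.
Set Implicit Arguments. Unset Strict Implicit. Unset Printing Implicit Defensive.
Import Order.TTheory GRing.Theory Num.Theory.
Local Open Scope ring_scope.

Section CIM.
Variables (R : realType) (N : finType) (h : nat) (a : N -> 'I_h -> R) (e : rel N).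

Definition imbalance (S : {set N}) (l : 'I_h) : R := \sum_(i in S) a i l.

Definition self_sufficient (S : {set N}) : bool := [forall l, imbalance S l <= 0].

Definition Jcim (C C' : {set N}) : R :=
  \sum_(l < h) Num.max 0 (imbalance C' l + imbalance C l).

Definition adjacent_coal (A B : {set N}) : bool :=
  (A != B) && [exists x in A, exists y in B, e x y].

Variable m : nat.

Definition is_coal (C : 'I_m -> {set N}) (X : {set N}) : bool := [exists p, C p == X].

Definition engaged (s : seq ({set N} * {set N})) (X : {set N}) : bool :=
  has (fun AB => (AB.1 == X) || (AB.2 == X)) s.

(* ms is the (ordered) list of mergers (requester, partner) performed in one
   iteration from the coalition state C *)
Definition valid_mergers (C : 'I_m -> {set N}) (ms : seq ({set N} * {set N})) : Prop :=
  (forall k, (k < size ms)%N ->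
     let A := (nth (set0, set0) ms k).1 in
     let B := (nth (set0, set0) ms k).2 in
     let pre := take k ms in
     [/\ is_coal C A, is_coal C B, ~~ self_sufficient A, adjacent_coal A B
         & ~~ engaged pre A] /\ ~~ engaged pre B /\
         (forall B', is_coal C B' -> adjacent_coal A B' -> ~~ engaged pre B' ->
           Jcim A B <= Jcim A B'))
  /\
  (forall A B, is_coal C A -> is_coal C B -> ~~ self_sufficient A ->
     adjacent_coal A B -> ~~ engaged ms A -> ~~ engaged ms B -> False)
  /\
  ((exists A B, [/\ is_coal C A, is_coal C B, ~~ self_sufficient A & adjacent_coal A B]) ->
     ms <> [::]).

Definition cim_step (C C' : 'I_m -> {set N}) : Prop :=
  ((forall p, self_sufficient (C p)) -> C' = C) /\
  exists ms, valid_mergers C ms /\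
    forall p,
      (forall AB, AB \in ms -> (AB.1 == C p) || (AB.2 == C p) -> C' p = AB.1 :|: AB.2)
      /\ (~~ engaged ms (C p) -> C' p = C p).

End CIM.

From HB Require Import structures.
From mathcomp Require Import all_boot all_order all_algebra.
From mathcomp Require Import reals.
From mathcomp Require Import zify.
Set Implicit Arguments. Unset Strict Implicit. Unset Printing Implicit Defensive.
Import Order.TTheory GRing.Theory Num.Theory.
Local Open Scope ring_scope.

(* The argument counts the distinct coalitions #|C r @: setT|, initially at
   most m.  Three facts about a single iteration are established first:
   - coalitions only grow, so every coalition keeps containing its M_p; in
     particular the coalitions stay nonempty and cover N;
   - a non-empty list of mergers strictly decreases the number of distinct
     coalitions (the update factors through the old coalitions and glues two
     distinct ones together);
   - by connectivity, if some coalition is not self-sufficient and some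
     coalition is not all of N, there is a non-self-sufficient coalition with
     an adjacent one, so a merger must take place.
   Hence after r iterations either all coalitions are self-sufficient, or all
   equal N, or at most m - r distinct coalitions remain.  For r = m - 1 a
   single coalition remains, and since the coalitions cover N it is N. *)

Lemma boundary_edge (N : finType) (e : rel N) (S : {set N}) (x z : N) :
  (forall x y, connect e x y) -> x \in S -> z \notin S ->
  exists x' y', [/\ x' \in S, y' \notin S & e x' y'].
Proof.
move=> conn Sx zS; have /connectP [p pth Ez] := conn x z; rewrite {z}Ez in zS.
elim: p x pth Sx zS => [|y p IH] x /=; first by move=> _ Sx; rewrite Sx.
move=> /andP [exy pth] Sx zS; have [Sy | nSy] := boolP (y \in S).
  exact: IH y pth Sy zS.
by exists x, y.
Qed.

Lemma coarsening_card_lt (I T : finType) (g g' : I -> T) (p q : I) :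
  (forall p q, g p = g q -> g' p = g' q) -> g p != g q -> g' p = g' q ->
  (#|g' @: setT| < #|g @: setT|)%N.
Proof.
move=> factor gpq g'pq.
pose f X := if [pick s | g s == X] is Some s then g' s else X.
have fg s : f (g s) = g' s.
  rewrite /f; case: pickP => [t /eqP /factor // | /(_ s)].
  by rewrite eqxx.
have -> : g' @: setT = f @: (g @: setT).
  by rewrite -imset_comp; apply: eq_imset => s /=; rewrite fg.
rewrite ltn_neqAle leq_imset_card andbT; apply/negP => /imset_injP inj.
have same : g p = g q by apply: inj; rewrite ?imset_f ?in_setT // !fg.
by rewrite same eqxx in gpq.
Qed.

Section OneIteration.
Variables (R : realType) (N : finType) (h : nat) (a : N -> 'I_h -> R) (e : rel N).
Variable m : nat.

Definition coalitions (C : 'I_m -> {set N}) : {set {set N}} := C @: setT.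

Definition merge_update (C C' : 'I_m -> {set N}) (ms : seq ({set N} * {set N})) :=
  forall p,
    (forall AB, AB \in ms -> (AB.1 == C p) || (AB.2 == C p) -> C' p = AB.1 :|: AB.2)
    /\ (~~ engaged ms (C p) -> C' p = C p).

Variables (C C' : 'I_m -> {set N}) (ms : seq ({set N} * {set N})).
Hypothesis update : merge_update C C' ms.

Lemma merge_update_sub p : C p \subset C' p.
Proof.
have [/hasP [AB inAB hAB] | /negPf free] := boolP (engaged ms (C p)).
  rewrite ((update p).1 AB inAB hAB).
  by case/orP: hAB => /eqP <-; [apply: subsetUl | apply: subsetUr].
by rewrite (update p).2 ?free.
Qed.

Lemma merge_update_factor p q : C p = C q -> C' p = C' q.
Proof.
move=> Cpq; have [/hasP [AB inAB hAB] | free] := boolP (engaged ms (C p)).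
  by rewrite ((update p).1 AB inAB hAB) ((update q).1 AB inAB) -?Cpq.
by rewrite (update p).2 // (update q).2 -?Cpq.
Qed.

Lemma merger_card_lt :
  valid_mergers a e C ms -> ms != [::] ->
  (#|coalitions C'| < #|coalitions C|)%N.
Proof.
case: ms update => [//|[A B] ms'] upd [first_ok _] _.
have [[/existsP [pA /eqP EA] /existsP [pB /eqP EB] _ /andP [AB _] _] _] :=
  first_ok 0%N isT.
apply: (@coarsening_card_lt _ _ C C' pA pB merge_update_factor).
  by rewrite EA EB.
by rewrite ((upd pA).1 (A, B)) ?((upd pB).1 (A, B)) ?mem_head //= ?EA ?EB eqxx ?orbT.
Qed.

End OneIteration.

Lemma adjacent_request (R : realType) (N : finType) (h : nat)
    (a : N -> 'I_h -> R) (e : rel N) (m : nat) (C : 'I_m -> {set N}) (p q : 'I_m) :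
  symmetric e -> (forall x y, connect e x y) ->
  (forall s, C s != set0) -> (forall x, exists s, x \in C s) ->
  ~~ self_sufficient a (C p) -> C q != [set: N] ->
  exists A B, [/\ is_coal C A, is_coal C B, ~~ self_sufficient a A
                 & adjacent_coal e A B].
Proof.
move=> e_sym conn nonempty cover nss nfull.
have coalC s : is_coal C (C s) by apply/existsP; exists s.
have outside s : C s != [set: N] -> exists z, z \notin C s.
  by rewrite eqEsubset subsetT /= => /subsetPn [z _]; exists z.
have [pfull | pnfull] := eqVneq (C p) [set: N].
  have [y yq] := set0Pn _ (nonempty q); have [z zq] := outside q nfull.
  have [x' [y' [x'q _ exy]]] := boundary_edge conn yq zq.
  exists (C p), (C q); split=> //; rewrite /adjacent_coal pfull eq_sym nfull.
  by apply/existsP; exists y'; rewrite in_setT; apply/existsP; exists x'; rewrite x'q e_sym.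
have [x xp] := set0Pn _ (nonempty p); have [z zp] := outside p pnfull.
have [x' [y' [x'p y'p exy]]] := boundary_edge conn xp zp.
have [s y's] := cover y'.
exists (C p), (C s); split=> //; apply/andP; split.
  by apply/eqP => Cps; rewrite Cps y's in y'p.
by apply/existsP; exists x'; rewrite x'p; apply/existsP; exists y'; rewrite y's.
Qed.

Section Run.
Variables (R : realType) (N : finType) (e : rel N) (m : nat).
Variables (M : 'I_m -> {set N}) (h : nat) (a : N -> 'I_h -> R).
Variable C : nat -> 'I_m -> {set N}.
Hypotheses (e_sym : symmetric e) (conn : forall x y, connect e x y).
Hypotheses (Mne : forall p, M p != set0) (Mcov : \bigcup_(p < m) M p = [set: N]).
Hypotheses (C0 : C 0%N = M)
  (steps : forall r, (r < m.-1)%N -> cim_step a e (C r) (C r.+1)).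

Lemma run_contains r : (r <= m.-1)%N -> forall p, M p \subset C r p.
Proof.
elim: r => [|r IH] Hr p; first by rewrite C0.
have [_ [ms [_ upd]]] := steps Hr.
exact: subset_trans (IH (ltnW Hr) p) (merge_update_sub upd p).
Qed.

Lemma run_cover r : (r <= m.-1)%N -> forall x, exists p, x \in C r p.
Proof.
move=> Hr x; have /bigcupP [p _ xp] : x \in \bigcup_(p < m) M p by rewrite Mcov.
by exists p; apply: subsetP (run_contains Hr p) _ xp.
Qed.

Lemma run_invariant r : (r <= m.-1)%N ->
  [\/ forall p, self_sufficient a (C r p), forall p, C r p = [set: N]
    | (#|coalitions (C r)| + r <= m)%N].
Proof.
elim: r => [|r IH] Hr.
  by apply: Or33; rewrite C0 addn0 (leq_trans (leq_imset_card _ _)) ?cardsT ?card_ord.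
have [stable [ms [valid upd]]] := steps Hr.
have [allss | /forallPn [p nss]] := boolP [forall p, self_sufficient a (C r p)].
  by apply: Or31; rewrite stable => p; apply: (forallP allss).
have grow_full q : C r q = [set: N] -> C r.+1 q = [set: N].
  by move=> full; apply/eqP; rewrite eqEsubset subsetT -full (merge_update_sub upd).
have [allfull | /forallPn [q nfull]] := boolP [forall q, C r q == [set: N]].
  by apply: Or32 => q; apply/grow_full/eqP/(forallP allfull).
have nonempty s : C r s != set0.
  apply: contraNneq (Mne s) => Crs; rewrite -subset0 -Crs.
  exact: run_contains (ltnW Hr) s.
have [A [B adj]] := adjacent_request e_sym conn nonempty (run_cover (ltnW Hr)) nss nfull.
have merged : ms != [::] by apply/eqP; apply: valid.2.2; exists A, B.
have fewer := merger_card_lt upd valid merged.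
case: (IH (ltnW Hr)) => [allss' | allfull' | count]; last by apply: Or33; lia.
  by rewrite allss' in nss.
by rewrite allfull' eqxx in nfull.
Qed.

Lemma single_coalition_full r : (r <= m.-1)%N ->
  (#|coalitions (C r)| <= 1)%N -> forall p, C r p = [set: N].
Proof.
move=> Hr one p; have inC s : C r s \in coalitions (C r) by rewrite imset_f.
apply/eqP; rewrite eqEsubset subsetT -Mcov; apply/bigcupsP => s _.
have same : C r s = C r p.
  by apply/eqP; have := card_le1P one _ (inC p) (C r s); rewrite inC inE.
by rewrite -same (run_contains Hr).
Qed.

End Run.

Theorem proposition2 (R : realType) (N : finType) (e : rel N) (m : nat)
    (M : 'I_m -> {set N}) (h : nat) (a : N -> 'I_h -> R)
    (C : nat -> 'I_m -> {set N}) :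
  symmetric e ->
  (forall x y : N, connect e x y) ->
  (forall p, M p != set0) ->
  (forall p q, p != q -> [disjoint M p & M q]) ->
  \bigcup_(p < m) M p = [set: N] ->
  (1 <= h)%N ->
  C 0%N = M ->
  (forall r, (r < m.-1)%N -> cim_step a e (C r) (C r.+1)) ->
  (forall p, self_sufficient a (C m.-1 p)) \/ (forall p, C m.-1 p = [set: N]).
Proof.
move=> e_sym conn Mne _ Mcov _ C0 steps.
have [allss | allfull | count] := run_invariant e_sym conn Mne Mcov C0 steps (leqnn m.-1).
- by left.
- by right.
right; apply: (single_coalition_full Mcov C0 steps (leqnn _)).
by lia.
Qed.
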